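(* If $n\ge3$, then $$b_{n,i}=b_{n,i-1}+(p-q)b_{n-1,i}+(r-p)b_{n-1,i-1},\qquad 2\le i\le n-1,$$ with $b_{n,1}=(p-q)b_{n-1,1}+q\sum_{j=1}^{n-1}b_{n-1,j}$ and $b_{n,n}=r\sum_{j=1}^{n-1}b_{n-1,j}$ for $n\ge2$, and $b_{1,1}=1$.
   Context: An inversion sequence of length $n$ is a sequence $\rho=\rho_1\cdots\rho_n$ of integers with $1\le \rho_i\le i$ for all $i$; $I_{n,i}$ is the set of those of length $n$ with last letter $i$. A level, descent, or ascent of $\rho$ is an index $i\in[n-1]$ with $\rho_i=\rho_{i+1}$, $\rho_i>\rho_{i+1}$, or $\rho_i<\rho_{i+1}$, respectively. Let $b_{n,i}=b_{n,i}(p,q,r)=\sum_{\rho\in I_{n,i}}p^{\mathrm{lev}(\rho)}q^{\mathrm{des}(\rho)}r^{\mathrm{asc}(\rho)}$. *)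

From HB Require Import structures.
From mathcomp Require Import all_boot all_order all_algebra.
Set Implicit Arguments. Unset Strict Implicit. Unset Printing Implicit Defensive.
Import GRing.Theory.
Local Open Scope ring_scope.

(* A sequence s = rho_1 ... rho_n (stored 0-indexed: nth 0 s k = rho_{k+1})
   is an inversion sequence iff 1 <= rho_{k+1} <= k+1 for all k < n. *)
Definition is_invseq (s : seq nat) : bool :=
  [forall k : 'I_(size s), (1 <= nth 0 s k <= k.+1)%N].

Definition lev (s : seq nat) : nat :=
  (\sum_(k < (size s).-1) (nth 0 s k == nth 0 s k.+1))%N.
Definition des (s : seq nat) : nat :=
  (\sum_(k < (size s).-1) (nth 0 s k.+1 < nth 0 s k))%N.
Definition asc (s : seq nat) : nat :=
  (\sum_(k < (size s).-1) (nth 0 s k < nth 0 s k.+1))%N.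

(* Every entry of an inversion sequence of length n lies in [1,n], so
   such sequences are exactly the tuples t : n.-tuple 'I_(n.+1) (values
   read as naturals) satisfying is_invseq. *)
Definition b (R : comNzRingType) (p q r : R) (n i : nat) : R :=
  \sum_(t : n.-tuple 'I_n.+1 |
          is_invseq (map val t) && (last 0%N (map val t) == i))
     p ^+ lev (map val t) * q ^+ des (map val t) * r ^+ asc (map val t).

From mathcomp Require Import all_boot all_order all_algebra ring.
Import GRing.Theory.
Set Implicit Arguments. Unset Strict Implicit.
Local Open Scope ring_scope.

(* Appending a letter x to a nonempty inversion sequence s multiplies its
   weight p^lev q^des r^asc by p, q or r according as x = last s,
   x < last s or x > last s, and the inversion sequences of length m+1 are
   exactly the extensions of those of length m by a letter 1 <= x <= m+1.
   Hence b_{m+1,i} = sum_j c(j,i) b_{m,j}, where c = step_weight: c(i,i) = p, c(j,i) = q for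
   j > i and c(j,i) = r for j < i.  The three recurrences are read off this
   formula: c(j,1) = q + [j = 1](p - q), c(j,m+1) = r for j <= m, and
   c(j,i+1) - c(j,i) vanishes except at j = i+1, where it is p - q, and at
   j = i, where it is r - p. *)

Lemma big_tuple_rcons (V : nmodType) (T : finType) n (F : n.+1.-tuple T -> V) :
  \sum_(t : n.+1.-tuple T) F t =
  \sum_(t : n.-tuple T) \sum_(x : T) F [tuple of rcons t x].
Proof.
have rcons_belast (t : n.+1.-tuple T) :
    rcons (belast (thead t) (behead t)) (last (thead t) (behead t)) = t.
  by rewrite -lastI [in RHS](tuple_eta t).
rewrite pair_big (reindex (fun u : n.-tuple T * T => [tuple of rcons u.1 u.2])) //.
exists (fun t => ([tuple of belast (thead t) (behead t)], last (thead t) (behead t))).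
  move=> [t x] _; have := rcons_belast [tuple of rcons t x].
  by case/rcons_inj=> t_eq ->; congr pair; apply: val_inj.
by move=> t _; apply: val_inj; exact: rcons_belast.
Qed.

Lemma is_invseqE s :
  is_invseq s = all (fun k => 1 <= nth 0 s k <= k.+1)%N (iota 0 (size s)).
Proof.
apply/forallP/allP => [inv k | inv k].
  by rewrite mem_iota => /= lt_k; exact: (inv (Ordinal lt_k)).
by apply: inv; rewrite mem_iota /=.
Qed.

Lemma is_invseq_rcons s x :
  is_invseq (rcons s x) = is_invseq s && (1 <= x <= (size s).+1)%N.
Proof.
rewrite !is_invseqE size_rcons -[in iota _ _]addn1 iotaD all_cat /= nth_rcons ltnn eqxx andbT.
congr andb; apply: eq_in_all => k; rewrite mem_iota => /andP[_ lt_k].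
by rewrite nth_rcons lt_k.
Qed.

Fixpoint invseqs (n : nat) : seq (seq nat) :=
  if n is m.+1 then [seq rcons s x | s <- invseqs m, x <- iota 1 m.+1]
  else [:: [::]].

Lemma invseqsS n :
  invseqs n.+1 = [seq rcons s x | s <- invseqs n, x <- iota 1 n.+1].
Proof. by []. Qed.

Lemma size_invseqs n s : s \in invseqs n -> size s = n.
Proof.
elim: n s => [|n IHn] s; first by rewrite inE => /eqP->.
by move=> /allpairsPdep[s' [x [s'_in _ ->]]]; rewrite size_rcons IHn.
Qed.

Lemma last_invseqs n s : (0 < n)%N -> s \in invseqs n -> (1 <= last 0 s <= n)%N.
Proof.
case: n => // n _; rewrite invseqsS.
by move=> /allpairsPdep[s' [x [_ x_in ->]]]; rewrite last_rcons -mem_iota.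
Qed.

Lemma sum_invseq_tuples (V : nmodType) N n (G : seq nat -> V) : (n < N)%N ->
  \sum_(t : n.-tuple 'I_N | is_invseq (map val t)) G (map val t) =
  \sum_(s <- invseqs n) G s.
Proof.
elim: n G => [|n IHn] G lt_nN.
  by rewrite (big_pred1 [tuple]) ?big_seq1 // => t; rewrite tuple0 is_invseqE.
rewrite big_mkcond big_tuple_rcons.
pose extend s := \sum_(x < N | (1 <= val x <= n.+1)%N) G (rcons s (val x)).
rewrite (eq_bigr (fun t : n.-tuple 'I_N =>
    if is_invseq (map val t) then extend (map val t) else 0)); last first.
  move=> t _; under eq_bigr do rewrite map_rcons is_invseq_rcons size_map size_tuple.
  by case: is_invseq => /=; [rewrite [RHS]big_mkcond | rewrite big1].
rewrite -big_mkcond IHn 1?ltnW // big_allpairs_dep; apply: eq_bigr => s _.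
rewrite -[iota 1 n.+1]/(index_iota 1 n.+2) big_geq_mkord.
by rewrite (big_ord_widen_cond N (fun x => 0 < x)%N (fun x => G (rcons s x))).
Qed.

Definition adj_count (e : rel nat) (s : seq nat) : nat :=
  \sum_(k < (size s).-1) e (nth 0 s k) (nth 0 s k.+1).

Lemma adj_count_rcons e s x : s != [::] ->
  adj_count e (rcons s x) = (adj_count e s + e (last 0 s) x)%N.
Proof.
case: s => [|y s] // _; rewrite /adj_count size_rcons /= big_ord_recr /=.
congr addn.
  apply: eq_bigr => k _; have lt_k := ltn_ord k.
  by rewrite -rcons_cons !nth_rcons /= ltnS (ltnW lt_k) lt_k.
rewrite nth_rcons ltnn eqxx -rcons_cons nth_rcons /= ltnS leqnn.
by rewrite (nth_last 0%N (y :: s)).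
Qed.

Lemma sum_nat_delta (R : pzSemiRingType) (c : R) (F : nat -> R) m n k :
  (m <= k < n)%N -> \sum_(m <= j < n) (if j == k then c else 0) * F j = c * F k.
Proof.
move=> k_range; under eq_bigr do rewrite (fun_if (fun x => x * F _)) mul0r.
by rewrite -big_mkcond big_nat1_eq k_range.
Qed.

Section Weights.

Variables (R : comNzRingType) (p q r : R).

Definition weight (s : seq nat) : R := p ^+ lev s * q ^+ des s * r ^+ asc s.

Definition step_weight (j i : nat) : R :=
  if j == i then p else if (i < j)%N then q else r.

Lemma weight_rcons s x : s != [::] ->
  weight (rcons s x) = weight s * step_weight (last 0 s) x.
Proof.
move=> s_ne0; rewrite /weight /step_weight -[lev]/(adj_count eq_op).
rewrite -[des]/(adj_count (fun a b => b < a)%N) -[asc]/(adj_count (fun a b => a < b)%N).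
rewrite !adj_count_rcons // !exprD.
by case: ltngtP => _; rewrite /= ?expr0 ?expr1; ring.
Qed.

Lemma b_invseqs n i : b p q r n i = \sum_(s <- invseqs n | last 0 s == i) weight s.
Proof.
by rewrite /b big_mkcondr [RHS]big_mkcond -(@sum_invseq_tuples _ n.+1).
Qed.

Lemma bS m i : (0 < m)%N -> (1 <= i <= m.+1)%N ->
  b p q r m.+1 i = \sum_(1 <= j < m.+1) step_weight j i * b p q r m j.
Proof.
move=> m_gt0 i_range.
transitivity (\sum_(s <- invseqs m) weight s * step_weight (last 0 s) i).
  rewrite b_invseqs invseqsS big_mkcond big_allpairs_dep big_seq_cond [RHS]big_seq_cond.
  apply: eq_bigr => s /andP[s_in _].
  have s_ne0 : s != [::] by rewrite -size_eq0 (size_invseqs s_in) -lt0n.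
  under eq_bigr do rewrite last_rcons.
  by rewrite -big_mkcond -[iota 1 m.+1]/(index_iota 1 m.+2) big_nat1_eq i_range weight_rcons.
under [RHS]eq_bigr do rewrite b_invseqs mulr_sumr big_mkcond.
rewrite exchange_big /=; apply: eq_big_seq => s s_in.
rewrite -big_mkcond (eq_bigl (eq_op^~ (last 0 s))) => [|j]; last exact: eq_sym.
by rewrite big_nat1_eq ltnS (last_invseqs m_gt0 s_in) mulrC.
Qed.

Lemma step_weight_one j : (1 <= j)%N ->
  step_weight j 1 = q + (if j == 1%N then p - q else 0).
Proof.
by case: j => [|[|j]] // _; rewrite /step_weight /= ?addr0 //; ring.
Qed.

Lemma step_weight_succ j i : step_weight j i.+1 =
  step_weight j i + (if j == i.+1 then p - q else 0) + (if j == i then r - p else 0).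
Proof.
rewrite /step_weight.
have [->|ne1] := eqVneq j i.+1; first by rewrite ltnSn (gtn_eqF (ltnSn i)); ring.
have [->|_] := eqVneq j i; first by rewrite ltnNge leqnSn; ring.
by rewrite [(i.+1 < j)%N]ltn_neqAle eq_sym ne1 !addr0.
Qed.

Lemma b_one_one : b p q r 1 1 = 1.
Proof.
by rewrite b_invseqs big_mkcond big_seq1 /= /weight /lev /des /asc !big_ord0 !mulr1.
Qed.

Lemma bS_first m : (0 < m)%N ->
  b p q r m.+1 1 = (p - q) * b p q r m 1 + q * \sum_(1 <= j < m.+1) b p q r m j.
Proof.
move=> m_gt0; rewrite bS //.
under eq_big_nat => j /andP[j_ge1 _] do rewrite step_weight_one // mulrDl.
by rewrite big_split sum_nat_delta // -mulr_sumr; apply: addrC.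
Qed.

Lemma bS_diag m : (0 < m)%N ->
  b p q r m.+1 m.+1 = r * \sum_(1 <= j < m.+1) b p q r m j.
Proof.
move=> m_gt0; rewrite bS ?leqnn // mulr_sumr.
apply: eq_big_nat => j /andP[_ lt_j].
by rewrite /step_weight (ltn_eqF lt_j) ltnNge (ltnW lt_j).
Qed.

Lemma bS_succ m i : (1 <= i < m)%N ->
  b p q r m.+1 i.+1 = b p q r m.+1 i + (p - q) * b p q r m i.+1 + (r - p) * b p q r m i.
Proof.
case/andP=> i_ge1 lt_im; have i_le_m : (i <= m)%N := ltnW lt_im.
have m_gt0 : (0 < m)%N := leq_trans i_ge1 i_le_m.
rewrite !bS ?i_ge1 ?ltnS ?lt_im ?(leqW i_le_m) //.
under eq_bigr do rewrite step_weight_succ !mulrDl.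
by rewrite !big_split !sum_nat_delta ?i_ge1 ?ltnS ?lt_im ?i_le_m.
Qed.

End Weights.

Theorem proposition3p9 (R : comNzRingType) (p q r : R) :
  [/\ b p q r 1 1 = 1,
      (forall n : nat, (2 <= n)%N ->
         b p q r n 1 = (p - q) * b p q r n.-1 1
                       + q * \sum_(1 <= j < n) b p q r n.-1 j),
      (forall n : nat, (2 <= n)%N ->
         b p q r n n = r * \sum_(1 <= j < n) b p q r n.-1 j) &
      (forall n i : nat, (3 <= n)%N -> (2 <= i <= n.-1)%N ->
         b p q r n i = b p q r n i.-1 + (p - q) * b p q r n.-1 i
                       + (r - p) * b p q r n.-1 i.-1)].
Proof.
split; first exact: b_one_one.
- by case=> [|[|m]] // _; rewrite bS_first.
- by case=> [|[|m]] // _; rewrite bS_diag.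
- by case=> [|m] // [|i] _ //= i_range; rewrite bS_succ.
Qed.
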